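(* A CPTP map $\mathcal M:\mathbf L(\mathcal H_X\otimes\mathcal H_Y)\to\mathbf L(\mathcal H_A\otimes\mathcal H_B)$ belongs to $\mathrm{LOCC}^*$ if and only if it can be written as $\mathcal M=\sum_{a,b}\mathcal A_{a|b}\otimes\mathcal B_{b|a}$, where for each $b$ the family $\{\mathcal A_{a|b}\}_a$ is a quantum instrument $\mathbf L(\mathcal H_X)\to\mathbf L(\mathcal H_A)$ and for each $a$ the family $\{\mathcal B_{b|a}\}_b$ is a quantum instrument $\mathbf L(\mathcal H_Y)\to\mathbf L(\mathcal H_B)$ (finite index sets).
   Context: A quantum instrument with classical input $i$ is a family $\{\mathcal A_{o|i}\}_o$ of completely positive linear maps with $\sum_o\mathcal A_{o|i}$ trace preserving for each $i$. $\mathrm{LOCC}^*$ is the set of CPTP maps of the form $\sum_{i_A,i_B,o_A,o_B}p(i_A,i_B|o_A,o_B)\,\mathcal A_{o_A|i_A}\otimes\mathcal B_{o_B|i_B}$ with instruments $\{\mathcal A_{o_A|i_A}\}_{o_A}$ (on Alice's side, $\mathbf L(\mathcal H_X)\to\mathbf L(\mathcal H_A)$), $\{\mathcal B_{o_B|i_B}\}_{o_B}$ (Bob's side, $\mathbf L(\mathcal H_Y)\to\mathbf L(\mathcal H_B)$) and a conditional probability distribution $p(i_A,i_B|o_A,o_B)$ over finite sets. *)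

From HB Require Import structures.
From mathcomp Require Import all_boot all_order all_algebra.
From mathcomp Require Import mxtens.
Set Implicit Arguments. Unset Strict Implicit. Unset Printing Implicit Defensive.
Import Order.TTheory GRing.Theory Num.Theory.
Local Open Scope ring_scope.

Section Quantum.
Variable C : numClosedFieldType.

Definition adjmx m n (A : 'M[C]_(m, n)) : 'M[C]_(n, m) := (map_mx Num.conj A)^T.

Definition psd n (P : 'M[C]_n) : Prop :=
  forall v : 'cV[C]_n, 0 <= (adjmx v *m P *m v) 0 0.

Definition supermap m n := 'M[C]_m -> 'M[C]_n.

Definition is_linear_map m n (f : supermap m n) : Prop :=
  forall (a : C) (x y : 'M[C]_m), f (a *: x + y) = a *: f x + f y.

(* tensor product of two linear maps, defined on the matrix-unit basis
   of L(C^m1 (x) C^m2) = 'M_(m1*m2) (index (i,k) <-> mxtens_index (i,k)) *)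
Definition tensor_map m1 n1 m2 n2 (f : supermap m1 n1) (g : supermap m2 n2)
  : supermap (m1 * m2) (n1 * n2) :=
  fun M => \sum_(i < m1) \sum_(j < m1) \sum_(k < m2) \sum_(l < m2)
     M (mxtens_index (i, k)) (mxtens_index (j, l))
       *: (f (delta_mx i j) *t g (delta_mx k l)).

Definition idmap_k k : supermap k k := fun M => M.

Definition positive_map m n (f : supermap m n) : Prop :=
  forall P : 'M[C]_m, psd P -> psd (f P).

Definition completely_positive m n (f : supermap m n) : Prop :=
  is_linear_map f /\
  forall k : nat, positive_map (tensor_map (@idmap_k k) f).

Definition trace_preserving m n (f : supermap m n) : Prop :=
  forall M : 'M[C]_m, \tr (f M) = \tr M.

Definition CPTP m n (f : supermap m n) : Prop :=
  completely_positive f /\ trace_preserving f.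

Definition instrument m n (O : finType) (A : O -> supermap m n) : Prop :=
  (forall o, completely_positive (A o)) /\
  trace_preserving (fun M => \sum_(o : O) A o M).

Definition LOCCstar dX dY dA dB (M : supermap (dX * dY) (dA * dB)) : Prop :=
  exists (IA IB OA OB : finType)
         (A : IA -> OA -> supermap dX dA) (B : IB -> OB -> supermap dY dB)
         (p : IA -> IB -> OA -> OB -> C),
    (forall iA, instrument (A iA)) /\
    (forall iB, instrument (B iB)) /\
    (forall iA iB oA oB, 0 <= p iA iB oA oB) /\
    (forall oA oB, \sum_(iA : IA) \sum_(iB : IB) p iA iB oA oB = 1) /\
    (forall rho : 'M[C]_(dX * dY),
       M rho = \sum_(iA : IA) \sum_(iB : IB) \sum_(oA : OA) \sum_(oB : OB)
                 p iA iB oA oB *: tensor_map (A iA oA) (B iB oB) rho).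

End Quantum.

From HB Require Import structures.
From mathcomp Require Import all_boot all_order all_algebra.
From mathcomp Require Import mxtens ring.
Import Order.TTheory GRing.Theory Num.Theory.
Set Implicit Arguments. Unset Strict Implicit.
Local Open Scope ring_scope.

(* A loop of instruments, in which each party's setting is the other party's
   outcome, is the LOCC^* map with the deterministic classical wiring
   p(iA, iB | oA, oB) = [iA = oB] [iB = oA].

   Conversely, take LOCC^* data (A, B, p) and index its terms by
   k = (iA, iB, oA, oB).  The loop labels outcomes on both sides by pairs
   (s, k) with a stage s in {Joint, Spill, Swap}.  On the setting (Joint, k')
   Alice measures A_{iA'} and, on outcome oA, reports (Joint, k') with weight
   p_k' <= 1 if oA = oA', the remaining weight going to (Spill, _); on the
   setting (Joint, k) Bob measures B_{iB} and reports (Joint, k) if his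
   outcome is oB, and (Spill, _) otherwise.  On Spill Alice answers Swap and
   Bob Spill, on Swap Alice answers Spill and Bob Swap.  Summed over stages,
   each party's weights reproduce its original instrument, so both families
   are instruments; and for every pair of labels except
   ((Joint, k), (Joint, k)) one of the two weights vanishes, the exception
   contributing p_k A_{oA|iA} (x) B_{oB|iB}. *)

Inductive stage := Joint | Spill | Swap.

Definition stage_code (s : stage) : option bool :=
  match s with Joint => None | Spill => Some false | Swap => Some true end.

Definition stage_decode (c : option bool) : stage :=
  match c with None => Joint | Some false => Spill | Some true => Swap end.

Lemma stage_codeK : cancel stage_code stage_decode.
Proof. by case. Qed.

HB.instance Definition _ := Finite.copy stage (can_type stage_codeK).

Lemma big_stage (V : nmodType) (F : stage -> V) :
  \sum_(s : stage) F s = F Joint + F Spill + F Swap.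
Proof.
by rewrite (bigD1 Joint) //= (bigD1 Spill) //= (bigD1 Swap) //= big1 ?addr0 ?addrA // => -[].
Qed.

Lemma big_pair (I J : finType) (V : nmodType) (F : I * J -> V) :
  \sum_(p : I * J) F p = \sum_i \sum_j F (i, j).
Proof. by rewrite pair_bigA; apply: eq_bigr => [[]]. Qed.

Lemma ler_sum_term (R : numDomainType) (I : finType) (F : I -> R) i :
  (forall j, 0 <= F j) -> F i <= \sum_j F j.
Proof. by move=> F_ge0; rewrite (bigD1 i) //= lerDl sumr_ge0. Qed.

Section KroneckerDelta.
Variable R : pzRingType.

Definition delta (T : eqType) (x y : T) : R := (x == y)%:R.

Lemma sum_delta (T : finType) (y : T) (F : T -> R) :
  \sum_x delta x y * F x = F y.
Proof.
rewrite (bigD1 y) //= /delta eqxx mul1r big1 ?addr0 // => x /negbTE ->.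
by rewrite mul0r.
Qed.

Lemma sum_deltaZ (T : finType) (V : lmodType R) (y : T) (F : T -> V) :
  \sum_x delta x y *: F x = F y.
Proof.
rewrite (bigD1 y) //= /delta eqxx scale1r big1 ?addr0 // => x /negbTE ->.
by rewrite scale0r.
Qed.

Lemma sum_delta1 (T : finType) (y : T) : \sum_x delta x y = 1.
Proof. by rewrite -[RHS](sum_delta y (fun=> 1)); apply: eq_bigr => x _; rewrite mulr1. Qed.

End KroneckerDelta.

Lemma delta_ge0 (R : numDomainType) (T : eqType) (x y : T) : 0 <= delta R x y.
Proof. exact: ler0n. Qed.

Section ScaledInstruments.
Variable C : numClosedFieldType.

Lemma tensmxZl m n p q (c : C) (A : 'M[C]_(m, n)) (B : 'M[C]_(p, q)) :
  (c *: A) *t B = c *: (A *t B).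
Proof. by apply/matrixP=> i j; rewrite !mxE mulrA. Qed.

Lemma tensmxZr m n p q (c : C) (A : 'M[C]_(m, n)) (B : 'M[C]_(p, q)) :
  A *t (c *: B) = c *: (A *t B).
Proof. by apply/matrixP=> i j; rewrite !mxE mulrCA. Qed.

Definition scale_map m n (c : C) (f : supermap C m n) : supermap C m n :=
  fun X => c *: f X.

Lemma tensor_map_scalel m1 n1 m2 n2 (c : C) (f : supermap C m1 n1)
    (g : supermap C m2 n2) rho :
  tensor_map (scale_map c f) g rho = c *: tensor_map f g rho.
Proof.
rewrite /tensor_map; do 4! (rewrite scaler_sumr; apply: eq_bigr => ? _).
by rewrite tensmxZl !scalerA mulrC.
Qed.

Lemma tensor_map_scaler m1 n1 m2 n2 (d : C) (f : supermap C m1 n1)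
    (g : supermap C m2 n2) rho :
  tensor_map f (scale_map d g) rho = d *: tensor_map f g rho.
Proof.
rewrite /tensor_map; do 4! (rewrite scaler_sumr; apply: eq_bigr => ? _).
by rewrite tensmxZr !scalerA mulrC.
Qed.

Lemma psdZ n (c : C) (P : 'M[C]_n) : 0 <= c -> psd P -> psd (c *: P).
Proof. by move=> c0 hP v; rewrite -scalemxAr -scalemxAl mxE mulr_ge0. Qed.

Lemma completely_positiveZ m n (c : C) (f : supermap C m n) :
  0 <= c -> completely_positive f -> completely_positive (scale_map c f).
Proof.
move=> c0 [lin_f pos_f]; split=> [a x y|k P hP].
  by rewrite /scale_map lin_f scalerDr !scalerA mulrC.
by rewrite tensor_map_scaler; apply/psdZ/pos_f.
Qed.

Lemma instrument_reweight m n (I O Y : finType) (A : I -> O -> supermap C m n)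
    (i0 : I) (w : Y -> C) (f : Y -> I * O) :
  (forall i, instrument (A i)) -> (forall y, 0 <= w y) ->
  (forall F : I -> O -> C, \sum_y w y * F (f y).1 (f y).2 = \sum_o F i0 o) ->
  instrument (fun y => scale_map (w y) (A (f y).1 (f y).2)).
Proof.
move=> instrA w_ge0 marg; split=> [y|M].
  exact/completely_positiveZ/(instrA _).1.
rewrite raddf_sum (eq_bigr (fun y => w y * \tr (A (f y).1 (f y).2 M))).
  by rewrite (marg (fun i o => \tr (A i o M))) -raddf_sum; apply: (instrA i0).2.
by move=> y _; apply: mxtraceZ.
Qed.

End ScaledInstruments.

Definition instrument_loop (C : numClosedFieldType) (dX dY dA dB : nat)
    (M : supermap C (dX * dY) (dA * dB)) : Prop :=
  exists (Ia Ib : finType)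
         (A : Ib -> Ia -> supermap C dX dA) (B : Ia -> Ib -> supermap C dY dB),
    (forall b, instrument (A b)) /\
    (forall a, instrument (B a)) /\
    (forall rho : 'M[C]_(dX * dY),
       M rho = \sum_(a : Ia) \sum_(b : Ib) tensor_map (A b a) (B a b) rho).

Lemma instrument_loop_LOCCstar (C : numClosedFieldType) dX dY dA dB
    (M : supermap C (dX * dY) (dA * dB)) :
  instrument_loop M -> LOCCstar M.
Proof.
case=> Ia [Ib [A [B [instrA [instrB defM]]]]].
exists Ib, Ia, Ia, Ib, A, B, (fun b a a' b' => delta C b b' * delta C a a').
do 2 split=> //; split=> [*|]; first by rewrite mulr_ge0 ?delta_ge0.
split=> [a' b'|rho].
  under eq_bigr do rewrite -mulr_sumr sum_delta1 mulr1.
  exact: sum_delta1.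
rewrite defM exchange_big /=; apply: eq_bigr => b _; apply: eq_bigr => a _.
under eq_bigr => a' _ do under eq_bigr => b' _ do
  rewrite -scalerA /delta eq_sym -/(delta C b' b).
under eq_bigr => a' _ do rewrite sum_deltaZ /delta eq_sym -/(delta C a' a).
by rewrite sum_deltaZ.
Qed.

Section LOCCstarAsLoop.
Variables (C : numClosedFieldType) (dX dY dA dB : nat) (IA IB OA OB : finType).
Variables (A : IA -> OA -> supermap C dX dA) (B : IB -> OB -> supermap C dY dB).
Variable p : IA -> IB -> OA -> OB -> C.
Hypothesis instrA : forall iA, instrument (A iA).
Hypothesis instrB : forall iB, instrument (B iB).
Hypothesis p_ge0 : forall iA iB oA oB, 0 <= p iA iB oA oB.
Hypothesis p_sum1 : forall oA oB, \sum_iA \sum_iB p iA iB oA oB = 1.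

Definition locc_index := (IA * IB * OA * OB)%type.
Definition inA (k : locc_index) := k.1.1.1.
Definition inB (k : locc_index) := k.1.1.2.
Definition outA (k : locc_index) := k.1.2.
Definition outB (k : locc_index) := k.2.
Definition pK (k : locc_index) := p (inA k) (inB k) (outA k) (outB k).

Lemma big_locc_index (V : nmodType) (F : locc_index -> V) :
  \sum_k F k = \sum_iA \sum_iB \sum_oA \sum_oB F (iA, iB, oA, oB).
Proof.
rewrite big_pair (big_pair (fun x => \sum_oB F (x, oB))).
by rewrite (big_pair (fun x => \sum_oA \sum_oB F (x, oA, oB))).
Qed.

Lemma pK_le1 k : pK k <= 1.
Proof.
rewrite -(p_sum1 (outA k) (outB k)).
apply: le_trans (ler_sum_term (inA k) _) => [|iA]; last exact: sumr_ge0.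
exact: (ler_sum_term (F := fun iB => p (inA k) iB (outA k) (outB k))).
Qed.

Definition agree_but_outA (k k' : locc_index) : C :=
  delta C (inA k) (inA k') * delta C (inB k) (inB k') * delta C (outB k) (outB k').

Definition agree_but_outB (k k' : locc_index) : C :=
  delta C (inA k) (inA k') * delta C (inB k) (inB k') * delta C (outA k) (outA k').

Lemma agree_but_outA_ge0 k k' : 0 <= agree_but_outA k k'.
Proof. by rewrite !mulr_ge0 ?delta_ge0. Qed.

Lemma agree_but_outB_ge0 k k' : 0 <= agree_but_outB k k'.
Proof. by rewrite !mulr_ge0 ?delta_ge0. Qed.

Lemma sum_agree_but_outA (F : IA -> OA -> C) k' :
  \sum_k agree_but_outA k k' * F (inA k) (outA k) = \sum_oA F (inA k') oA.
Proof.
rewrite big_locc_index -(sum_delta (inA k') (fun iA => \sum_oA F iA oA)).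
apply: eq_bigr => iA _.
rewrite -(sum_delta (inB k') (fun=> delta C iA (inA k') * \sum_oA F iA oA)).
apply: eq_bigr => iB _; rewrite mulrA mulr_sumr; apply: eq_bigr => oA _.
rewrite -(sum_delta (outB k') (fun=> delta C iB (inB k') * delta C iA (inA k') * F iA oA)).
by apply: eq_bigr => oB _; rewrite /agree_but_outA /=; ring.
Qed.

Lemma sum_agree_but_outB (F : IB -> OB -> C) k :
  \sum_k' agree_but_outB k' k * F (inB k') (outB k') = \sum_oB F (inB k) oB.
Proof.
rewrite big_locc_index -(sum_delta (inA k) (fun=> \sum_oB F (inB k) oB)).
apply: eq_bigr => iA _.
rewrite -(sum_delta (inB k) (fun iB => delta C iA (inA k) * \sum_oB F iB oB)).
apply: eq_bigr => iB _.
rewrite -(sum_delta (outA k) (fun=> delta C iB (inB k) * (delta C iA (inA k) * \sum_oB F iB oB))).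
apply: eq_bigr => oA _; rewrite !mulr_sumr; apply: eq_bigr => oB _.
by rewrite /agree_but_outB /=; ring.
Qed.

Definition alice_weight (b a : stage * locc_index) : C :=
  match b.1, a.1 with
  | Joint, Joint => delta C a.2 b.2 * pK b.2
  | Joint, Spill => agree_but_outA a.2 b.2 - delta C a.2 b.2 * pK b.2
  | Spill, Swap | Swap, Spill => agree_but_outA a.2 b.2
  | _, _ => 0
  end.

Definition bob_weight (a b : stage * locc_index) : C :=
  match a.1, b.1 with
  | Joint, Joint => delta C b.2 a.2
  | Joint, Spill => agree_but_outB b.2 a.2 - delta C b.2 a.2
  | Spill, Spill | Swap, Swap => agree_but_outB b.2 a.2
  | _, _ => 0
  end.

Lemma alice_weight_ge0 b a : 0 <= alice_weight b a.
Proof.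
case: b a => [[] k'] [[] k]; rewrite /alice_weight /= ?agree_but_outA_ge0 ?lexx //.
  by rewrite mulr_ge0 ?delta_ge0 ?p_ge0.
have [->|neq] := eqVneq k k'.
  by rewrite /agree_but_outA /delta !eqxx !mul1r subr_ge0 pK_le1.
by rewrite /delta (negbTE neq) mul0r subr0 agree_but_outA_ge0.
Qed.

Lemma bob_weight_ge0 a b : 0 <= bob_weight a b.
Proof.
case: a b => [[] k] [[] k']; rewrite /bob_weight /= ?agree_but_outB_ge0 ?delta_ge0 ?lexx //.
have [->|neq] := eqVneq k' k.
  by rewrite /agree_but_outB /delta !eqxx !mul1r subrr.
by rewrite /delta (negbTE neq) subr0 agree_but_outB_ge0.
Qed.

Lemma sum_stage_alice_weight b k :
  \sum_s alice_weight b (s, k) = agree_but_outA k b.2.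
Proof.
by case: b => [[] k']; rewrite big_stage /alice_weight /= ?add0r ?addr0 // addrC subrK.
Qed.

Lemma sum_stage_bob_weight a k' :
  \sum_s bob_weight a (s, k') = agree_but_outB k' a.2.
Proof.
by case: a => [[] k]; rewrite big_stage /bob_weight /= ?add0r ?addr0 // addrC subrK.
Qed.

Lemma sum_alice_weight b (F : IA -> OA -> C) :
  \sum_a alice_weight b a * F (inA a.2) (outA a.2) = \sum_oA F (inA b.2) oA.
Proof.
rewrite big_pair exchange_big /= -(sum_agree_but_outA F b.2).
by apply: eq_bigr => k _; rewrite -mulr_suml sum_stage_alice_weight.
Qed.

Lemma sum_bob_weight a (F : IB -> OB -> C) :
  \sum_b bob_weight a b * F (inB b.2) (outB b.2) = \sum_oB F (inB a.2) oB.
Proof.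
rewrite big_pair exchange_big /= -(sum_agree_but_outB F a.2).
by apply: eq_bigr => k' _; rewrite -mulr_suml sum_stage_bob_weight.
Qed.

Lemma alice_bob_weight a b :
  alice_weight b a * bob_weight a b =
  delta C a.1 Joint * delta C b (Joint, a.2) * pK a.2.
Proof.
case: a b => [[] k] [[] k'] /=; rewrite /alice_weight /bob_weight /delta /=;
  rewrite ?mulr0 ?mul0r //.
by rewrite xpair_eqE mul1r; have [->|_] := eqVneq k k'; rewrite ?mul1r ?mulr1 ?mul0r ?mulr0.
Qed.

Definition alice_instr (b a : stage * locc_index) : supermap C dX dA :=
  scale_map (alice_weight b a) (A (inA a.2) (outA a.2)).

Definition bob_instr (a b : stage * locc_index) : supermap C dY dB :=
  scale_map (bob_weight a b) (B (inB b.2) (outB b.2)).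

Lemma alice_instr_instrument b : instrument (alice_instr b).
Proof.
apply: (instrument_reweight (i0 := inA b.2) (f := fun a => (inA a.2, outA a.2))) => //.
  exact: alice_weight_ge0.
exact: sum_alice_weight.
Qed.

Lemma bob_instr_instrument a : instrument (bob_instr a).
Proof.
apply: (instrument_reweight (i0 := inB a.2) (f := fun b => (inB b.2, outB b.2))) => //.
  exact: bob_weight_ge0.
exact: sum_bob_weight.
Qed.

Lemma sum_alice_bob_instr rho :
  \sum_a \sum_b tensor_map (alice_instr b a) (bob_instr a b) rho =
  \sum_k pK k *: tensor_map (A (inA k) (outA k)) (B (inB k) (outB k)) rho.
Proof.
pose T k k' := tensor_map (A (inA k) (outA k)) (B (inB k') (outB k')) rho.
under eq_bigr => a _ do under eq_bigr => b _ do
  rewrite tensor_map_scalel tensor_map_scaler scalerA alice_bob_weight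
          mulrAC -scalerA -/(T a.2 b.2).
under eq_bigr => a _ do
  rewrite -scaler_sumr (sum_deltaZ (Joint, a.2) (fun b => T a.2 b.2)) /=.
rewrite big_pair exchange_big /=; apply: eq_bigr => k _.
under eq_bigr do rewrite -scalerA.
exact: (sum_deltaZ Joint (fun=> pK k *: T k k)).
Qed.

End LOCCstarAsLoop.

Lemma LOCCstar_instrument_loop (C : numClosedFieldType) dX dY dA dB
    (M : supermap C (dX * dY) (dA * dB)) :
  LOCCstar M -> instrument_loop M.
Proof.
case=> IA [IB [OA [OB [A [B [p [instrA [instrB [p_ge0 [p_sum1 defM]]]]]]]]]].
exists (stage * locc_index IA IB OA OB)%type, (stage * locc_index IA IB OA OB)%type.
exists (alice_instr A p), (bob_instr B); split; first exact: alice_instr_instrument.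
split; first exact: bob_instr_instrument.
by move=> rho; rewrite sum_alice_bob_instr defM big_locc_index.
Qed.

Theorem mainTheorem14 (C : numClosedFieldType) (dX dY dA dB : nat)
  (M : supermap C (dX * dY) (dA * dB)) :
  CPTP M ->
  (LOCCstar M <->
   exists (Ia Ib : finType)
          (A : Ib -> Ia -> supermap C dX dA) (B : Ia -> Ib -> supermap C dY dB),
     (forall b, instrument (A b)) /\
     (forall a, instrument (B a)) /\
     (forall rho : 'M[C]_(dX * dY),
        M rho = \sum_(a : Ia) \sum_(b : Ib) tensor_map (A b a) (B a b) rho)).
Proof.
move=> _; split; [exact: LOCCstar_instrument_loop | exact: instrument_loop_LOCCstar].
Qed.
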